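(* Let $d\ge3$. Every $d$-regular graph on $n$ vertices has a total vertex cover with at most $\frac{d}{d+1}\,n$ vertices. Moreover, if $d\ge5$, then every connected $d$-regular graph on $n$ vertices other than the complete graph $K_{d+1}$ has a total vertex cover with at most $\frac{d-\epsilon}{d+1}\,n$ vertices, where $\epsilon=\frac{1}{2d+1}$.
   Context: A total vertex cover of a graph $G$ is a set $S\subseteq V(G)$ that is a vertex cover (every edge has an endpoint in $S$) and a total dominating set (every vertex of $G$, including those in $S$, has a neighbour in $S$). *)

From mathcomp Require Import all_boot.
Set Implicit Arguments. Unset Strict Implicit. Unset Printing Implicit Defensive.

Definition simple_graph (T : finType) (e : rel T) : Prop :=
  symmetric e /\ irreflexive e.

Definition nbhd (T : finType) (e : rel T) (x : T) : {set T} := [set y | e x y].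

Definition regular (T : finType) (e : rel T) (d : nat) : Prop :=
  forall x : T, #|nbhd e x| = d.

Definition vertex_cover (T : finType) (e : rel T) (S : {set T}) : Prop :=
  forall x y : T, e x y -> (x \in S) || (y \in S).

Definition total_dominating (T : finType) (e : rel T) (S : {set T}) : Prop :=
  forall x : T, exists2 y, y \in S & e x y.

Definition total_vertex_cover (T : finType) (e : rel T) (S : {set T}) : Prop :=
  vertex_cover e S /\ total_dominating e S.

Definition connected_graph (T : finType) (e : rel T) : Prop :=
  forall x y : T, connect e x y.

Definition is_complete_graph (T : finType) (e : rel T) (m : nat) : Prop :=
  #|T| = m /\ (forall x y : T, x != y -> e x y).

From mathcomp Require Import all_boot zify.
Set Implicit Arguments. Unset Strict Implicit. Unset Printing Implicit Defensive.

(* Let S be a minimum total vertex cover. Its complement I is independent, so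
   every vertex of I has all its d neighbours in S and the vertices of S have
   d |I| neighbours in I altogether.  A vertex
   y of S with no neighbour in I is the unique S-neighbour of some x in S
   (otherwise S \ y is a smaller cover), and x has d - 1 neighbours in I;
   charging y to x gives |S| <= d |I|.  For the second bound call u in I
   exclusive if it is the only I-neighbour of each of its neighbours.  Outside
   K_{d+1} every u has two non-adjacent neighbours a, b, and some x in S then
   has all its S-neighbours in {a, b} (otherwise (S \ {a, b}) + u is a smaller
   cover).  Charging each exclusive u to such an x, and each non-exclusive
   vertex of I to a neighbour with at least two I-neighbours, the same count
   yields 2 |S| + |I| <= 2 d |I|. *)

Lemma sum_mem_card (T : finType) (A B : {set T}) :
  \sum_(v in A) (v \in B : nat) = #|A :&: B|.
Proof.
by rewrite -big_mkcondr sum1_card; apply: eq_card => v; rewrite !inE.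
Qed.

Lemma sum_mem_card_sub (T : finType) (A B : {set T}) :
  B \subset A -> \sum_(v in A) (v \in B : nat) = #|B|.
Proof. by move=> /setIidPr BA; rewrite sum_mem_card BA. Qed.

Section Graph.
Variables (T : finType) (e : rel T).
Hypotheses (e_sym : symmetric e) (e_irr : irreflexive e).

Local Notation N := (nbhd e).

Lemma in_nbhd x y : (y \in N x) = e x y.
Proof. by rewrite inE. Qed.

Lemma sum_card_nbhdI (A B : {set T}) :
  \sum_(v in A) #|N v :&: B| = \sum_(u in B) #|N u :&: A|.
Proof.
have card_as_sum x (C : {set T}) : #|N x :&: C| = \sum_(u in C) (u \in N x : nat).
  by rewrite sum_mem_card setIC.
under eq_bigr do rewrite card_as_sum.
rewrite exchange_big /=; apply: eq_bigr => u _; rewrite card_as_sum.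
by apply: eq_bigr => v _; rewrite !in_nbhd e_sym.
Qed.

Definition total_vertex_coverb (S : {set T}) : bool :=
  [forall x, forall y, e x y ==> (x \in S) || (y \in S)] &&
  [forall x, exists y, (y \in S) && e x y].

Lemma total_vertex_coverP (S : {set T}) :
  reflect (total_vertex_cover e S) (total_vertex_coverb S).
Proof.
apply: (iffP andP) => [[/forallP cov /forallP dom]|[cov dom]]; split.
- by move=> x y; move/forallP/(_ y)/implyP: (cov x).
- by move=> x; have /existsP[y /andP[]] := dom x; exists y.
- by apply/forallP => x; apply/forallP => y; apply/implyP; apply: cov.
- by apply/forallP => x; have [y yS exy] := dom x; apply/existsP; exists y; rewrite yS.
Qed.

Lemma exists_min_total_vertex_cover : (forall x, exists y, e x y) ->
  exists2 S, total_vertex_cover e S &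
    forall S', total_vertex_cover e S' -> #|S| <= #|S'|.
Proof.
move=> has_nbr; have tvcT : total_vertex_coverb setT.
  apply/total_vertex_coverP; split=> [x y _|x]; first by rewrite inE.
  by have [y exy] := has_nbr x; exists y; rewrite ?inE.
case: (arg_minnP (fun S : {set T} => #|S|) tvcT) => S /total_vertex_coverP tvcS minS.
by exists S => // S' /total_vertex_coverP /minS.
Qed.

Lemma adj_neq x y : e x y -> x != y.
Proof. by apply: contraTneq => ->; rewrite e_irr. Qed.

Lemma connected_closed_full (C : {set T}) u : connected_graph e -> u \in C ->
  (forall x z, x \in C -> e x z -> z \in C) -> forall y, y \in C.
Proof.
move=> conn uC closedC y; have /connectP[p pth ->] := conn u y.
by elim: p u uC pth => //= z p IH x xC /andP[exz pth]; apply: IH (closedC _ _ xC exz) pth.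
Qed.

Section Regular.
Variable d : nat.
Hypothesis reg : regular e d.

Lemma regular_has_nbr : 0 < d -> forall x, exists y, e x y.
Proof.
move=> d_gt0 x; have /card_gt0P[y] : 0 < #|N x| by rewrite reg.
by rewrite in_nbhd; exists y.
Qed.

Lemma clique_closed_nbhd_closed u :
  (forall a b, e u a -> e u b -> a != b -> e a b) ->
  forall x z, x \in u |: N u -> e x z -> z \in u |: N u.
Proof.
move=> clique x z; rewrite !inE => /orP[/eqP-> -> | eux exz]; first by rewrite orbT.
apply/negPn/negP; rewrite negb_or => /andP[zu euz].
have sub : z |: (u |: (N u :\ x)) \subset N x.
  apply/subsetP => y; rewrite !inE => /or3P[/eqP-> // | /eqP-> | /andP[yx euy]].
    by rewrite e_sym.
  by apply: clique; rewrite // eq_sym.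
have uNx : u \notin N u :\ x by rewrite !inE e_irr andbF.
have zNx : z \notin u |: (N u :\ x) by rewrite !inE negb_or zu (negbTE euz) andbF.
move: (subset_leq_card sub); rewrite reg cardsU1 zNx cardsU1 uNx.
by have := cardsD1 x (N u); rewrite in_nbhd eux reg; lia.
Qed.

Lemma exists_nonadjacent_nbrs u : connected_graph e -> ~ is_complete_graph e d.+1 ->
  exists a b, [/\ e u a, e u b, a != b & ~~ e a b].
Proof.
move=> conn not_complete.
have [/existsP[a /existsP[b /and4P[*]]] | /existsPn no_pair] :=
  boolP [exists a, exists b, [&& e u a, e u b, a != b & ~~ e a b]].
  by exists a, b.
have clique a b : e u a -> e u b -> a != b -> e a b.
  move=> eua eub ab; move/existsPn: (no_pair a) => /(_ b).
  by rewrite eua eub ab /= negbK.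
have allC :=
  connected_closed_full conn (setU11 u (N u)) (clique_closed_nbhd_closed clique).
case: not_complete; split.
  have uN : u \notin N u by rewrite in_nbhd e_irr.
  have := cardsU1 u (N u); rewrite uN reg add1n => <-.
  by apply: eq_card => y; rewrite allC.
move=> x y xy; move: (allC x) (allC y); rewrite !inE.
case/orP=> [/eqP xu | eux] /orP[/eqP yu | euy].
- by rewrite xu yu eqxx in xy.
- by rewrite xu.
- by rewrite yu e_sym.
- exact: clique.
Qed.

Section MinimumCover.
Hypothesis d_ge3 : 3 <= d.
Variable S : {set T}.
Hypotheses (tvcS : total_vertex_cover e S)
  (minS : forall S', total_vertex_cover e S' -> #|S| <= #|S'|).

Local Notation I := (~: S).

Definition odeg v := #|N v :&: I|.

Lemma nbr_in_cover x y : x \notin S -> e x y -> y \in S.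
Proof. by move=> xS /(tvcS.1 x y); rewrite (negbTE xS). Qed.

Lemma odeg_add v : odeg v + #|N v :&: S| = d.
Proof. by rewrite /odeg -setDE addnC cardsID reg. Qed.

Lemma sum_odeg : \sum_(v in S) odeg v = d * #|I|.
Proof.
rewrite /odeg sum_card_nbhdI // mulnC -sum_nat_const; apply: eq_bigr => u uI.
rewrite -(reg u); apply/eq_card => v; rewrite !inE andb_idr //.
by apply: nbr_in_cover; rewrite -in_setC.
Qed.

Definition inner := [set y in S | odeg y == 0].

Definition pendants :=
  [set x in S | [exists y in inner, N x :&: S == [set y]]].

Lemma inner_odeg v : v \in S -> (v \in inner) = (odeg v == 0).
Proof. by rewrite inE => ->. Qed.

Lemma inner_sub : inner \subset S.
Proof. by apply/subsetP => v; rewrite inE => /andP[]. Qed.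

Lemma pendants_sub : pendants \subset S.
Proof. by apply/subsetP => v; rewrite inE => /andP[]. Qed.

Lemma inner_pendant y : y \in inner -> exists2 x, x \in S & N x :&: S = [set y].
Proof.
rewrite inE => /andP[yS]; rewrite cards_eq0 => /eqP noI.
have nbr_inS z : e y z -> z \in S.
  move=> eyz; apply/contraT => zS.
  have : z \in N y :&: I by rewrite !inE eyz.
  by rewrite noI inE.
have [/existsP[x /andP[xS /eqP Nx]] | /existsPn no_pendant] :=
  boolP [exists x, (x \in S) && (N x :&: S == [set y])]; first by exists x.
suff /minS : total_vertex_cover e (S :\ y) by rewrite (cardsD1 y S) yS; lia.
split.
- move=> x z; rewrite !inE.
  have [->|xy] := eqVneq x y => exz.
    by rewrite eq_sym adj_neq //= nbr_inS ?orbT.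
  have [zy|_] := eqVneq z y; last exact: tvcS.1.
  by rewrite /= orbF nbr_inS // e_sym -zy.
- move=> x; have [w wS exw] := tvcS.2 x.
  have [wy|wy] := eqVneq w y; last by exists w; rewrite // !inE wy.
  rewrite {w wS}wy in exw.
  have [z /andP[zS exz]|none] := pickP [pred z | (z \in S :\ y) && e x z].
    by exists z.
  have Nx : N x :&: S = [set y].
    apply/eqP; rewrite eqEsubset sub1set in_setI in_nbhd exw yS !andbT.
    apply/subsetP => z; rewrite !inE => /andP[exz zS].
    by apply/contraFT: (none z) => zy; rewrite /= !inE zy zS exz.
  have [xS|xI] := boolP (x \in S); first by move: (no_pendant x); rewrite xS Nx eqxx.
  by case/negP: xI; apply: nbr_inS; rewrite e_sym.
Qed.

Lemma odeg_pendant x : x \in pendants -> odeg x + 1 = d.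
Proof.
rewrite inE => /andP[_ /existsP[y /andP[_ /eqP Nx]]].
by rewrite -(odeg_add x) Nx cards1.
Qed.

Lemma card_inner_le : #|inner| <= #|pendants|.
Proof.
pose snbr x := odflt x [pick y in N x :&: S].
apply: leq_trans (leq_imset_card snbr pendants); apply/subset_leq_card/subsetP.
move=> y yU; have [x xS Nx] := inner_pendant yU; apply/imsetP; exists x.
  by rewrite inE xS; apply/existsP; exists y; rewrite yU Nx eqxx.
by rewrite /snbr; case: pickP => [z|/(_ y)]; rewrite Nx inE ?eqxx // => /eqP.
Qed.

Lemma card_cover_le : #|S| <= d * #|I|.
Proof.
have : \sum_(v in S) (1 + (v \in pendants)) <= \sum_(v in S) (odeg v + (v \in inner)).
  apply: leq_sum => v vS; rewrite inner_odeg //.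
  case: (boolP (v \in pendants)) => [/odeg_pendant | _]; first lia.
  by case: (odeg v).
rewrite !big_split /= sum1_card sum_odeg.
rewrite !sum_mem_card_sub ?inner_sub ?pendants_sub //; have := card_inner_le; lia.
Qed.

Definition exclusive := [set u in I | [forall v, e u v ==> (odeg v <= 1)]].

Lemma exclusive_notin u : u \in exclusive -> u \notin S.
Proof. by rewrite !inE => /andP[]. Qed.

Lemma exclusive_nbr u v z : u \in exclusive -> e u v -> z \notin S -> e v z -> z = u.
Proof.
move=> uX; move: (uX); rewrite inE => /andP[_ /forallP/(_ v)/implyP odeg_le1] euv zS evz.
apply: (card_le1_eqP (odeg_le1 euv)); rewrite !inE ?evz ?zS //.
by rewrite e_sym euv exclusive_notin.
Qed.

Lemma adj_set2 u a b p : e u a -> e u b -> p \in [set a; b] -> e u p.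
Proof. by move=> eua eub; rewrite !inE => /orP[]/eqP->. Qed.

Section Swap.
Variables (u a b : T).
Hypotheses (uX : u \in exclusive) (eua : e u a) (eub : e u b).
Hypotheses (ab : a != b) (nab : ~~ e a b).

Lemma swap_vertex_cover : vertex_cover e (u |: (S :\: [set a; b])).
Proof.
suff cov x z : e x z -> x \notin u |: (S :\: [set a; b]) -> z \in u |: (S :\: [set a; b]).
  move=> x z exz; apply/orP; have [xS'|xS'] := boolP (x \in _); first by left.
  by right; apply: cov exz xS'.
move=> exz; rewrite !in_setU1 !in_setD negb_or negb_and negbK => /andP[xu xabS].
have [//|zu] := eqVneq z u; rewrite /=.
have zS : z \in S.
  case/orP: xabS => [xab|xS]; last exact: nbr_in_cover xS exz.
  apply/contraT => zS; case/negP: zu; apply/eqP.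
  exact: exclusive_nbr uX (adj_set2 eua eub xab) zS exz.
rewrite zS andbT; apply/negP => zab.
case/orP: xabS => [xab|xS].
  move: xab zab exz; rewrite !inE => /orP[]/eqP-> /orP[]/eqP->;
    by rewrite ?e_irr ?(negbTE nab) // e_sym (negbTE nab).
case/negP: xu; apply/eqP; rewrite e_sym in exz.
exact: exclusive_nbr uX (adj_set2 eua eub zab) xS exz.
Qed.

Lemma swap_total_dominating :
  (forall x, x \in S -> ~~ (N x :&: S \subset [set a; b])) ->
  total_dominating e (u |: (S :\: [set a; b])).
Proof.
move=> no_witness x; have uS := exclusive_notin uX.
have [->|xu] := eqVneq x u.
  have : ~~ (N u \subset [set a; b]).
    by apply/negP => /subset_leq_card; rewrite reg cards2 ab; lia.
  case/subsetPn => z; rewrite in_nbhd => euz zab; exists z => //.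
  by rewrite in_setU1 in_setD zab (nbr_in_cover uS euz) orbT.
have [xS|xI] := boolP (x \in S).
  case/subsetPn: (no_witness x xS) => z; rewrite in_setI in_nbhd => /andP[exz zS] zab.
  by exists z; rewrite // in_setU1 in_setD zab zS orbT.
have [z zS exz] := tvcS.2 x; exists z => //.
rewrite in_setU1 in_setD zS andbT; apply/orP; right; apply/negP => zab.
case/negP: xu; apply/eqP; rewrite e_sym in exz.
exact: exclusive_nbr uX (adj_set2 eua eub zab) xI exz.
Qed.

Lemma exclusive_witness : exists2 x, x \in S & N x :&: S \subset [set a; b].
Proof.
have [/existsP[x /andP[xS sub]] | /existsPn no_witness] :=
  boolP [exists x, (x \in S) && (N x :&: S \subset [set a; b])]; first by exists x.
have abS : [set a; b] \subset S.
  by apply/subsetP => p /(adj_set2 eua eub); apply: nbr_in_cover; apply: exclusive_notin.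
have /minS : total_vertex_cover e (u |: (S :\: [set a; b])).
  split; first exact: swap_vertex_cover.
  by apply: swap_total_dominating => x xS; move: (no_witness x); rewrite xS.
rewrite cardsU1 in_setD (negbTE (exclusive_notin uX)) andbF.
by have := cardsID [set a; b] S; rewrite (setIidPr abS) cards2 ab; lia.
Qed.

End Swap.

Definition witnesses := [set x in S | (#|N x :&: S| <= 2) &&
  [exists u in exclusive, N x :&: S \subset N u]].

Lemma witnesses_sub : witnesses \subset S.
Proof. by apply/subsetP => v; rewrite inE => /andP[]. Qed.

Lemma card_exclusive_le :
  (forall u, exists a b, [/\ e u a, e u b, a != b & ~~ e a b]) ->
  #|exclusive| <= #|witnesses|.
Proof.
move=> nonadj.
pose owner x :=
  if [pick a in N x :&: S] is Some a then odflt x [pick u in N a :&: I] else x.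
apply: leq_trans (leq_imset_card owner witnesses); apply/subset_leq_card/subsetP.
move=> u uX; have [a [b [eua eub ab nab]]] := nonadj u.
have [x xS sub] := exclusive_witness uX eua eub ab nab.
apply/imsetP; exists x.
  have small : #|N x :&: S| <= 2.
    by rewrite (leq_trans (subset_leq_card sub)) // cards2 ab.
  rewrite inE xS small; apply/existsP; exists u; rewrite uX; apply: subset_trans sub _.
  by apply/subsetP => p /(adj_set2 eua eub); rewrite in_nbhd.
rewrite /owner; case: (pickP (mem (N x :&: S))) => [a' a'N|none]; last first.
  by have [z zS exz] := tvcS.2 x; move: (none z); rewrite !inE exz zS.
have eua' : e u a' by apply: adj_set2 eua eub _; apply: (subsetP sub).
case: pickP => [u' /=|/(_ u)]; last by rewrite !inE e_sym eua' exclusive_notin.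
by rewrite !inE => /andP[ea'u' u'S]; rewrite (exclusive_nbr uX eua' u'S ea'u').
Qed.

Definition heavy v := if 1 < odeg v then odeg v else 0.

Lemma card_nonexclusive_le : #|I :\: exclusive| <= \sum_(v in S) heavy v.
Proof.
have heavy_sum v : heavy v = \sum_(u in I) ((u \in N v) && (1 < odeg v) : nat).
  rewrite /heavy; case: ifP => _; last by rewrite big1 // => w _; rewrite andbF.
  by rewrite /odeg setIC -sum_mem_card; apply: eq_bigr => w _; rewrite andbT.
under eq_bigr do rewrite heavy_sum.
rewrite exchange_big /= setDE -sum_mem_card; apply: leq_sum => w wI.
rewrite inE; case: (boolP (w \in exclusive)) => //= wX.
have [v ewv odeg_v] : exists2 v, e w v & 1 < odeg v.
  move: wX; rewrite inE wI /= => /forallPn[v]; rewrite negb_imply -ltnNge => /andP[].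
  by exists v.
have vS : v \in S by apply: nbr_in_cover ewv; rewrite -in_setC.
by rewrite (bigD1 v) //= in_nbhd e_sym ewv odeg_v.
Qed.

Lemma odeg_witness x : x \in witnesses -> d <= odeg x + 2.
Proof. by rewrite inE => /and3P[_ small _]; have := odeg_add x; lia. Qed.

Lemma witness_notin_pendants x : x \in witnesses -> x \notin pendants.
Proof.
rewrite !inE => /and3P[_ _ /existsP[u /andP[uX sub]]].
apply/negP => /andP[_ /existsP[y /andP[]]]; rewrite inE => /andP[_].
rewrite cards_eq0 => /eqP noI /eqP Nx; move: sub; rewrite Nx sub1set in_nbhd => euy.
have : u \in N y :&: I by rewrite !inE e_sym euy exclusive_notin.
by rewrite noI inE.
Qed.

Lemma card_cover_le_sharp : 5 <= d ->
  (forall u, exists a b, [/\ e u a, e u b, a != b & ~~ e a b]) ->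
  2 * #|S| + #|I| <= 2 * d * #|I|.
Proof.
move=> d_ge5 nonadj.
have : \sum_(v in S)
         (2 + heavy v + (v \in witnesses) + (v \in pendants) + (v \in pendants))
       <= \sum_(v in S) (odeg v + odeg v + (v \in inner) + (v \in inner)).
  apply: leq_sum => v vS; rewrite inner_odeg // /heavy.
  have [vW|_] := boolP (v \in witnesses).
    rewrite (negbTE (witness_notin_pendants vW)); have := odeg_witness vW.
    by case: ifP; case: (odeg v) => [|[|k]] //=; lia.
  have [vP|_] := boolP (v \in pendants).
    by have := odeg_pendant vP; case: ifP; case: (odeg v) => [|[|k]] //=; lia.
  by case: ifP; case: (odeg v) => [|[|k]] //=; lia.
rewrite !big_split /= sum_nat_const sum_odeg.
rewrite !sum_mem_card_sub ?inner_sub ?pendants_sub ?witnesses_sub //.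
have exclusiveI : exclusive \subset I by apply/subsetP => u; rewrite inE => /andP[].
have := cardsID exclusive I; rewrite (setIidPr exclusiveI).
have := card_inner_le; have := card_exclusive_le nonadj; have := card_nonexclusive_le.
lia.
Qed.

End MinimumCover.
End Regular.
End Graph.

Theorem theorem1p6 (d : nat) (d_ge3 : 3 <= d) :
  (forall (T : finType) (e : rel T), simple_graph e -> regular e d ->
     exists S : {set T}, total_vertex_cover e S /\ #|S| * d.+1 <= d * #|T|)
  /\
  (5 <= d ->
   forall (T : finType) (e : rel T), simple_graph e -> regular e d ->
     connected_graph e -> ~ is_complete_graph e d.+1 ->
     exists S : {set T}, total_vertex_cover e S /\
       #|S| * d.+1 * (2 * d).+1 <= (d * (2 * d).+1 - 1) * #|T|).
Proof.
have min_cover (T : finType) (e : rel T) : regular e d ->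
    exists2 S, total_vertex_cover e S &
      forall S', total_vertex_cover e S' -> #|S| <= #|S'|.
  by move=> reg; apply/exists_min_total_vertex_cover/(regular_has_nbr reg); lia.
split=> [T e [e_sym e_irr] reg | d_ge5 T e [e_sym e_irr] reg conn not_complete];
  have [S tvcS minS] := min_cover T e reg; exists S; split => //; rewrite -(cardsC S).
  by have := card_cover_le e_sym e_irr reg d_ge3 tvcS minS; nia.
have nonadj u := exists_nonadjacent_nbrs e_sym e_irr reg u conn not_complete.
by have := card_cover_le_sharp e_sym e_irr reg d_ge3 tvcS minS d_ge5 nonadj; nia.
Qed.
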